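(* Consider the two-stage decision problem described in the context, with random uncertainty $u$ and probability level $\varepsilon\in(0,1)$. Let $$O := \min_{x \in \mathcal{X},\, \eta}\Big\{ f(x) + \eta \;:\; \Pr\Big[ \min_{y \in \mathcal{Y}(x, u)} h(y) \leq \eta \Big] \geq 1 - \varepsilon\Big\},$$ and, for a set $\mathcal{U}$, $$O_{\mathcal{U}} := \min_{x \in \mathcal{X}} \Big\{ f(x) + \max_{u \in \mathcal{U}} \min_{y \in \mathcal{Y}(x, u)} h(y) \Big\}.$$ Suppose $(x^*, \eta^* )$ is an optimal solution of the first problem (with optimal value $O$) and $x_{\mathcal{U}}^*$ is an optimal solution of the second problem (with optimal value $O_{\mathcal{U}}$). For any $x \in \mathcal{X}$ let $$O_x := f(x) + \min \Big\{ \eta ~\Big|~ \Pr \Big[ \min_{y \in \mathcal{Y}(x, u)} h(y) \leq \eta \Big] \geq 1 - \varepsilon \Big\}.$$ Then $O = O_{x^*} \leq O_{x_{\mathcal{U}}^*} \leq O_{\mathcal{U}}$ whenever $\mathcal{U}$ satisfies $\Pr[u \in \mathcal{U}] \geq 1 - \varepsilon$. Moreover, for $$\mathcal{U}^* := \Big\{ u ~\Big|~ \min_{y \in \mathcal{Y}(x^*, u)} h(y) \leq \eta^* \Big\}$$ one has $\Pr[u \in \mathcal{U}^*] \geq 1 - \varepsilon$ and $O = O_{\mathcal{U}^*}$.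
   Context: $\mathcal{X}$ is the feasible set of first-stage decisions $x$, and $f$ is a real-valued first-stage cost function on $\mathcal X$. $u$ is a random vector (the uncertainty) with probability measure $\Pr$. For each $x$ and each realization $u$, $\mathcal{Y}(x,u)$ is the feasible set of second-stage decisions $y$, and $h$ is the real-valued second-stage cost function; the minimum over an empty set is $+\infty$. The minima in the definitions of $O_x$ are assumed attained. *)

From HB Require Import structures.
From mathcomp Require Import all_boot all_order all_algebra.
From mathcomp Require Import all_classical all_reals.
From mathcomp Require Import ereal measure probability.
Set Implicit Arguments. Unset Strict Implicit. Unset Printing Implicit Defensive.
Import Order.TTheory GRing.Theory Num.Theory.
Local Open Scope classical_set_scope.
Local Open Scope ring_scope.
Local Open Scope ereal_scope.

Section TwoStage.
Context {R : realType} {Xt Yt : Type} {d : measure_display}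
  {T : measurableType d}.

(* second-stage value  min_{y in Y(x,u)} h(y)  (+oo on an empty set) *)
Definition second_stage (Y : Xt -> T -> set Yt) (h : Yt -> R) (x : Xt) (u : T)
  : \bar R := ereal_inf [set (h y)%:E | y in Y x u].

Definition chance_event (Y : Xt -> T -> set Yt) (h : Yt -> R) (x : Xt) (eta : R)
  : set T := [set u | second_stage Y h x u <= eta%:E].

Definition chance_feasible (P : probability T R) (eps : R)
  (Y : Xt -> T -> set Yt) (h : Yt -> R) (x : Xt) (eta : R) : Prop :=
  P (chance_event Y h x eta) >= (1 - eps)%:E.

Definition O_x (P : probability T R) (eps : R) (f : Xt -> R)
  (Y : Xt -> T -> set Yt) (h : Yt -> R) (x : Xt) : \bar R :=
  (f x)%:E + ereal_inf [set eta%:E | eta in chance_feasible P eps Y h x].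

Definition robust_obj (f : Xt -> R) (Y : Xt -> T -> set Yt) (h : Yt -> R)
  (U : set T) (x : Xt) : \bar R :=
  (f x)%:E + ereal_sup [set second_stage Y h x u | u in U].

Definition O_U (X : set Xt) (f : Xt -> R) (Y : Xt -> T -> set Yt) (h : Yt -> R)
  (U : set T) : \bar R :=
  ereal_inf [set robust_obj f Y h U x | x in X].

End TwoStage.

From HB Require Import structures.
From mathcomp Require Import all_boot all_order all_algebra.
From mathcomp Require Import all_classical all_reals.
From mathcomp Require Import ereal measure probability.
From mathcomp Require Import lra.
Import Order.TTheory GRing.Theory Num.Theory.
Local Open Scope classical_set_scope.
Local Open Scope ring_scope.
Local Open Scope ereal_scope.

(* If the worst case over U of the second-stage value is eta, then U is contained
   in the chance event at level eta, so eta is chance-feasible whenever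
   Pr[U] >= 1 - eps; hence O_x is at most the robust objective for every such U.
   Conversely, on the chance event U* of the optimal pair x*, eta* the worst case
   is at most eta*, while optimality of that pair bounds every O_x from below
   by f(x* ) + eta*. *)

Section TwoStageBounds.
Context {R : realType} {Xt Yt : Type} {d : measure_display}
  {T : measurableType d}.
Variables (P : probability T R) (eps : R) (f : Xt -> R)
  (Y : Xt -> T -> set Yt) (h : Yt -> R).

Lemma second_stage_gtNy x u :
  (Y x u !=set0 -> exists2 y, Y x u y & forall y', Y x u y' -> (h y <= h y')%R) ->
  -oo < second_stage Y h x u.
Proof.
move=> hmin; rewrite /second_stage.
have [/hmin [y Yy ymin]|Y0] := pselect (Y x u !=set0).
  apply: (@lt_le_trans _ _ (h y)%:E); first exact: ltNyr.
  by apply: le_ereal_inf_tmp => _ [y' Yy' <-]; rewrite lee_fin ymin.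
suff -> : [set (h y)%:E | y in Y x u] = set0 by rewrite ereal_inf0.
by apply/seteqP; split => // z [y Yy _]; apply: Y0; exists y.
Qed.

Lemma le_O_x x c :
  (forall eta, chance_feasible P eps Y h x eta -> (c <= f x + eta)%R) ->
  c%:E <= O_x P eps f Y h x.
Proof.
move=> lb; rewrite /O_x.
have : (c - f x)%:E <= ereal_inf [set eta%:E | eta in chance_feasible P eps Y h x].
  by apply: le_ereal_inf_tmp => _ [eta feta <-]; rewrite lee_fin lerBlDl lb.
move: (ereal_inf _) => [r||] //=; rewrite ?lee_fin => ?; first lra.
by rewrite addey ?leey.
Qed.

Lemma O_x_le x eta :
  chance_feasible P eps Y h x eta -> O_x P eps f Y h x <= (f x + eta)%:E.
Proof.
by move=> feta; rewrite /O_x EFinD; apply: leeD2l; apply: ereal_inf_lbound; exists eta.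
Qed.

Lemma sub_chance_event x U eta :
  ereal_sup [set second_stage Y h x u | u in U] <= eta%:E ->
  U `<=` chance_event Y h x eta.
Proof.
move=> supU u Uu; apply: le_trans supU.
by apply: ereal_sup_ubound; exists u.
Qed.

Lemma O_x_le_robust_obj x U :
  (eps < 1)%R -> measurable U -> (1 - eps)%:E <= P U ->
  (forall eta, measurable (chance_event Y h x eta)) ->
  (forall u, U u -> -oo < second_stage Y h x u) ->
  O_x P eps f Y h x <= robust_obj f Y h U x.
Proof.
move=> eps1 mU PU mchance ss_gt.
have [u Uu] : U !=set0.
  by apply/set0P/negP => /eqP U0; move: PU; rewrite U0 measure0 lee_fin; lra.
rewrite /robust_obj; case E : (ereal_sup _) => [r||]; last 2 first.
- by rewrite addey ?leey.
- have : second_stage Y h x u <= -oo by rewrite -E; apply: ereal_sup_ubound; exists u.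
  by rewrite leNgt ss_gt.
apply: O_x_le; apply: (le_trans PU); apply: le_measure; rewrite ?inE //.
by apply: sub_chance_event; rewrite E.
Qed.

Lemma robust_obj_chance_event_le x eta :
  robust_obj f Y h (chance_event Y h x eta) x <= (f x + eta)%:E.
Proof.
by rewrite /robust_obj EFinD; apply: leeD2l; apply: ge_ereal_sup => _ [u + <-].
Qed.

End TwoStageBounds.

Theorem lemma1 (R : realType) (Xt Yt : Type) (d : measure_display)
  (T : measurableType d) (P : probability T R) (eps : R)
  (X : set Xt) (f : Xt -> R) (Y : Xt -> T -> set Yt) (h : Yt -> R)
  (heps : (0 < eps < 1)%R)
  (* the inner minima over y are attained (when the feasible set is nonempty) *)
  (hYmin : forall x u, X x -> Y x u !=set0 ->
     exists2 y, Y x u y & forall y', Y x u y' -> (h y <= h y')%R)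
  (* the minima over eta in the definition of O_x are attained *)
  (hetamin : forall x, X x -> chance_feasible P eps Y h x !=set0 ->
     exists2 eta, chance_feasible P eps Y h x eta &
       forall eta', chance_feasible P eps Y h x eta' -> (eta <= eta')%R)
  (* the chance events are events *)
  (hmeas : forall x eta, X x -> measurable (chance_event Y h x eta))
  (xstar : Xt) (etastar : R)
  (* (xstar, etastar) is an optimal solution of the chance-constrained problem *)
  (hxs : X xstar) (hfeas : chance_feasible P eps Y h xstar etastar)
  (hopt : forall x eta, X x -> chance_feasible P eps Y h x eta ->
     (f xstar + etastar <= f x + eta)%R) :
  (* part 1 *)
  ((f xstar + etastar)%:E = O_x P eps f Y h xstar /\
   forall (U : set T) (xU : Xt), measurable U -> P U >= (1 - eps)%:E ->
     X xU ->
     (forall x, X x -> robust_obj f Y h U xU <= robust_obj f Y h U x) ->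
     O_x P eps f Y h xstar <= O_x P eps f Y h xU /\
     O_x P eps f Y h xU <= O_U X f Y h U)
  /\
  (* part 2 *)
  (P (chance_event Y h xstar etastar) >= (1 - eps)%:E /\
   (f xstar + etastar)%:E = O_U X f Y h (chance_event Y h xstar etastar)).
Proof.
have [_ eps1] := andP heps.
have O_x_ge x : X x -> (f xstar + etastar)%:E <= O_x P eps f Y h x.
  by move=> Xx; apply: le_O_x => eta; apply: hopt.
have O_x_le_robust x U : X x -> measurable U -> (1 - eps)%:E <= P U ->
    O_x P eps f Y h x <= robust_obj f Y h U x.
  move=> Xx mU PU; apply: O_x_le_robust_obj => // [eta|u _].
    exact: hmeas.
  exact/second_stage_gtNy/hYmin.
have Oxs : (f xstar + etastar)%:E = O_x P eps f Y h xstar.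
  by apply/eqP; rewrite eq_le O_x_ge //= O_x_le.
split; [split => // U xU mU PU XxU xUopt; split|split => //].
- by rewrite -Oxs O_x_ge.
- apply: (le_trans (O_x_le_robust xU U XxU mU PU)).
  by apply: le_ereal_inf_tmp => _ [x Xx <-]; apply: xUopt.
- apply/eqP; rewrite eq_le; apply/andP; split.
    apply: le_ereal_inf_tmp => _ [x Xx <-].
    by apply: (le_trans (O_x_ge x Xx)); apply: O_x_le_robust => //; apply: hmeas.
  apply: (le_trans _ (robust_obj_chance_event_le f Y h xstar etastar)).
  by rewrite /O_U; apply: ereal_inf_lbound; exists xstar.
Qed.
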